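(* For every $f:\{0,1\}^n\to\{-1,1\}$, $$\mathbb E_{x,y}\sum_{\alpha,\beta\in\{0,1\}^n}\hat{f_x}^2(\alpha)\,\hat{f_y}^2(\beta)\,\widehat{f_{x+y}}^2(\alpha+\beta)=\mathbb E_y\sum_{\alpha\in\{0,1\}^n}\hat{f_y}^6(\alpha),$$ with $x,y$ independent uniform in $\{0,1\}^n$.
   Context: $\{0,1\}^n$ is identified with $\mathbb F_2^n$. $\hat h(\alpha)=\mathbb E_z h(z)(-1)^{\langle\alpha,z\rangle}$ with $\langle\alpha,z\rangle=\sum\alpha_iz_i\bmod 2$; $f_y(x)=f(x)f(x+y)$. *)

From mathcomp Require Import all_boot all_order all_algebra.
Set Implicit Arguments. Unset Strict Implicit. Unset Printing Implicit Defensive.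
Import Order.TTheory GRing.Theory Num.Theory.
Local Open Scope ring_scope.

Definition cube (n : nat) := {ffun 'I_n -> bool}.

Definition cadd n (x y : cube n) : cube n := [ffun i => xorb (x i) (y i)].

Definition cdot n (a z : cube n) : bool :=
  odd (\sum_(i < n) (a i && z i : nat)).

Definition chi n (a z : cube n) : rat := if cdot a z then -1 else 1.

Definition Ecube n (g : cube n -> rat) : rat :=
  (\sum_(z : cube n) g z) / (#|{: cube n}|)%:R.

Definition fourier n (h : cube n -> rat) (a : cube n) : rat :=
  Ecube (fun z => h z * chi a z).

Definition fder n (f : cube n -> rat) (y : cube n) : cube n -> rat :=
  fun x => f x * f (cadd x y).

(* With [walsh h a = sum_z h z (-1)^<a,z>] (so [hat h = walsh h / 2^n]) and
   [P x w = sum_z f_x(z) f_x(z+w)] the autocorrelation of [f_x], one has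
   [walsh f_x a ^ 2 = walsh (P x) a].  Parseval and the convolution theorem turn the left side into
   a multiple of [sum_(x,y,w) P x w P y w P (x+y) w] and the right side into the same multiple of
   [sum_(y,w,z) P y w P y z P y (w+z)]; these agree because
   [P x w = sum_z f(z) f(z+x) f(z+w) f(z+x+w)] is symmetric in [x] and [w]. *)
From mathcomp Require Import all_boot all_order all_algebra.
From mathcomp Require Import ring lra.
Import Order.TTheory GRing.Theory Num.Theory.
Local Open Scope ring_scope.
Set Implicit Arguments. Unset Strict Implicit.

Section WalshTransform.
Variable n : nat.
Notation C := (cube n).
Notation N := ((#|{: C}|)%:R : rat).

Definition cube0 : C := [ffun _ => false].

Lemma caddC (x y : C) : cadd x y = cadd y x.
Proof. by apply/ffunP=> i; rewrite !ffunE; case: (x i); case: (y i). Qed.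

Lemma caddA (x y z : C) : cadd x (cadd y z) = cadd (cadd x y) z.
Proof. by apply/ffunP=> i; rewrite !ffunE; case: (x i); case: (y i); case: (z i). Qed.

Lemma caddKl (u z : C) : cadd u (cadd u z) = z.
Proof. by apply/ffunP=> i; rewrite !ffunE; case: (u i); case: (z i). Qed.

Lemma caddK (u z : C) : cadd (cadd z u) u = z.
Proof. by apply/ffunP=> i; rewrite !ffunE; case: (u i); case: (z i). Qed.

Lemma cadd_inj (u : C) : injective (fun z : C => cadd u z).
Proof. by move=> a b /(congr1 (fun z : C => cadd u z)); rewrite !caddKl. Qed.

Lemma caddI (u : C) : injective (fun z : C => cadd z u).
Proof. by move=> a b /(congr1 (fun z : C => cadd z u)); rewrite /= !caddK. Qed.

Lemma cadd_eq0 (v w : C) : (cadd v w == cube0) = (v == w).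
Proof.
apply/eqP/eqP=> [/ffunP vw0 | ->]; last by apply/ffunP=> i; rewrite !ffunE; case: (w i).
by apply/ffunP=> i; move: (vw0 i); rewrite !ffunE; case: (v i); case: (w i).
Qed.

Lemma cube_card_neq0 : N != 0.
Proof. by rewrite pnatr_eq0 -lt0n; apply/card_gt0P; exists cube0. Qed.

Lemma cdotC (a z : C) : cdot a z = cdot z a.
Proof. by rewrite /cdot; congr odd; apply: eq_bigr=> i _; rewrite andbC. Qed.

Lemma cdotD (a z w : C) : cdot a (cadd z w) = cdot a z (+) cdot a w.
Proof.
rewrite /cdot !(big_morph odd oddD (erefl : odd 0 = false)) -big_split /=.
by apply: eq_bigr=> i _; rewrite ffunE; case: (a i); case: (z i); case: (w i).
Qed.

Lemma chiC (a z : C) : chi a z = chi z a.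
Proof. by rewrite /chi cdotC. Qed.

Lemma chiD (a z w : C) : chi a (cadd z w) = chi a z * chi a w.
Proof.
by rewrite /chi cdotD; case: (cdot a z); case: (cdot a w); rewrite /= ?mulrNN ?mulr1 ?mulN1r.
Qed.

Lemma chi0 (a : C) : chi a cube0 = 1.
Proof. by rewrite /chi /cdot big1 // => i _; rewrite ffunE andbF. Qed.

Lemma chi_mulss (a z : C) : chi a z * chi a z = 1.
Proof. by rewrite /chi; case: (cdot a z); rewrite ?mulrNN mulr1. Qed.

Lemma sum_chi (u : C) : \sum_a chi a u = if u == cube0 then N else 0.
Proof.
case: eqP=> [->|/eqP u_neq0].
  by rewrite (eq_bigr (fun _ => 1)) ?sumr_const // => a _; rewrite chi0.
have [i ui] : exists i, u i.
  apply/existsP; apply: contraR u_neq0 => /existsPn ui0.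
  by apply/eqP/ffunP=> j; rewrite ffunE; apply/negbTE.
pose e : C := [ffun j => j == i].
have chi_e : chi e u = -1.
  rewrite /chi /cdot (bigD1 i) //= big1 ?addn0; first by rewrite ffunE eqxx ui.
  by move=> j /negbTE ji; rewrite ffunE ji.
(* translating the summation variable by [e] flips the sign of every term *)
have : \sum_a chi a u = - \sum_a chi a u.
  rewrite {1}(reindex_inj (@caddI e)) -mulN1r mulr_sumr.
  by apply: eq_bigr=> a _ /=; rewrite chiC chiD -!(chiC u) (chiC u e) chi_e mulrC.
lra.
Qed.

Definition walsh (h : C -> rat) (a : C) : rat := \sum_z h z * chi a z.

Definition autocorr (h : C -> rat) (w : C) : rat := \sum_z h z * h (cadd z w).

Lemma fourierE (h : C -> rat) a : fourier h a = walsh h a / N.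
Proof. by []. Qed.

Lemma walsh_sqr (h : C -> rat) a : walsh h a ^+ 2 = walsh (autocorr h) a.
Proof.
rewrite expr2 /walsh mulr_suml.
under eq_bigr=> z _ do rewrite mulr_sumr (reindex_inj (@cadd_inj z)).
rewrite exchange_big /=; apply: eq_bigr=> w _; rewrite mulr_suml.
apply: eq_bigr=> z _; rewrite chiD -[RHS]mulr1 -(chi_mulss a z); ring.
Qed.

Lemma parseval (g h : C -> rat) :
  \sum_a walsh g a * walsh h a = N * \sum_w g w * h w.
Proof.
have expand a : walsh g a * walsh h a = \sum_v \sum_w g v * h w * chi a (cadd v w).
  rewrite /walsh mulr_suml; apply: eq_bigr=> v _; rewrite mulr_sumr.
  by apply: eq_bigr=> w _; rewrite chiD mulrACA.
rewrite (eq_bigr _ (fun a _ => expand a)) exchange_big mulr_sumr; apply: eq_bigr=> v _.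
rewrite exchange_big /=.
under eq_bigr=> w _ do rewrite -mulr_sumr sum_chi cadd_eq0.
rewrite (bigD1 v) //= eqxx big1 ?addr0; first by rewrite mulrC.
by move=> w wv; rewrite eq_sym (negbTE wv) mulr0.
Qed.

Lemma walsh_conv (g h : C -> rat) a :
  \sum_b walsh g b * walsh h (cadd a b) = N * walsh (fun w => g w * h w) a.
Proof.
have shift b : walsh h (cadd a b) = walsh (fun w => h w * chi a w) b.
  by apply: eq_bigr=> w _; rewrite chiC chiD !(chiC w) mulrA.
under eq_bigr=> b _ do rewrite shift.
by rewrite parseval; congr (_ * _); apply: eq_bigr=> w _; rewrite mulrA.
Qed.

Lemma sum_walsh_triple (g h k : C -> rat) :
  \sum_a \sum_b walsh g a * walsh h b * walsh k (cadd a b)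
  = N * N * \sum_w g w * h w * k w.
Proof.
have inner a : \sum_b walsh g a * walsh h b * walsh k (cadd a b)
    = walsh g a * (N * walsh (fun w => h w * k w) a).
  by rewrite -walsh_conv mulr_sumr; apply: eq_bigr=> b _; rewrite mulrA.
rewrite (eq_bigr _ (fun a _ => inner a)).
under eq_bigr=> a _ do rewrite mulrCA.
rewrite -mulr_sumr parseval mulrA.
by congr (_ * _); apply: eq_bigr=> w _; rewrite mulrA.
Qed.

Lemma sum_walsh_cube (g : C -> rat) :
  \sum_a walsh g a ^+ 3 = N * \sum_w g w * autocorr g w.
Proof. by under eq_bigr=> a _ do rewrite exprS walsh_sqr; rewrite parseval. Qed.

Lemma sum_sym_triple (P : C -> C -> rat) :
  (forall x w, P x w = P w x) ->
  \sum_x \sum_y \sum_w P x w * P y w * P (cadd x y) w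
  = \sum_w \sum_x P w x * autocorr (P w) x.
Proof.
move=> Psym; under eq_bigr=> x _ do rewrite exchange_big.
rewrite exchange_big; apply: eq_bigr=> w _; apply: eq_bigr=> x _.
rewrite mulr_sumr; apply: eq_bigr=> y _.
by rewrite !(Psym _ w) (caddC y x) mulrA.
Qed.

End WalshTransform.

Lemma autocorr_fder_sym n (f : cube n -> rat) x w :
  autocorr (fder f x) w = autocorr (fder f w) x.
Proof.
by apply: eq_bigr=> z _; rewrite /fder -!caddA (caddC x w); ring.
Qed.

Theorem lemma6p5 (n : nat) (f : cube n -> rat)
  (hf : forall x, f x = 1 \/ f x = -1) :
  Ecube (fun x => Ecube (fun y =>
    \sum_(a : cube n) \sum_(b : cube n)
      (fourier (fder f x) a) ^+ 2 * (fourier (fder f y) b) ^+ 2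
      * (fourier (fder f (cadd x y)) (cadd a b)) ^+ 2))
  = Ecube (fun y => \sum_(a : cube n) (fourier (fder f y) a) ^+ 6).
Proof.
set N : rat := (#|{: cube n}|)%:R.
pose P x := autocorr (fder f x).
have fourier_sqr x a : fourier (fder f x) a ^+ 2 = (N ^+ 2)^-1 * walsh (P x) a.
  by rewrite fourierE expr_div_n walsh_sqr mulrC.
have lhs x y : \sum_a \sum_b fourier (fder f x) a ^+ 2 * fourier (fder f y) b ^+ 2
      * fourier (fder f (cadd x y)) (cadd a b) ^+ 2
    = (N ^+ 2)^-1 ^+ 3 * (N * N * \sum_w P x w * P y w * P (cadd x y) w).
  rewrite -sum_walsh_triple mulr_sumr; apply: eq_bigr=> a _.
  by rewrite mulr_sumr; apply: eq_bigr=> b _; rewrite !fourier_sqr; ring.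
have rhs y : \sum_a fourier (fder f y) a ^+ 6
    = (N ^+ 2)^-1 ^+ 3 * (N * \sum_w P y w * autocorr (P y) w).
  rewrite -sum_walsh_cube mulr_sumr; apply: eq_bigr=> a _.
  by rewrite -[6%N]/(2 * 3)%N exprM fourier_sqr exprMn.
rewrite /Ecube -/N; under eq_bigr=> x _ do under eq_bigr=> y _ do rewrite lhs.
under [in RHS]eq_bigr=> y _ do rewrite rhs.
under eq_bigr=> x _ do rewrite -mulr_sumr -mulr_sumr.
rewrite -mulr_suml -mulr_sumr -mulr_sumr (sum_sym_triple (P := P)); last exact: autocorr_fder_sym.
rewrite -2![in RHS]mulr_sumr.
by move: (cube_card_neq0 n); rewrite -/N => N_neq0; field.
Qed.
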